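(* Let $x_1,\dots,x_n\in\mathbb{R}^D$ be distinct points, let $\mathbf{f}=(f(x_1),\dots,f(x_n))^\top\in\mathbb{R}^n$ be the values of a function $f$ at these points, and let $\lambda>0$. For each level $l\ge 0$ let $\mathbf{K}^{(l)}\in\mathbb{R}^{n\times n}$ be the Gaussian kernel matrix $[\mathbf{K}^{(l)}]_{ij}=\exp\!\big(-\|x_i-x_j\|^2/(2r_l^2)\big)$ with bandwidth $r_l>0$, let $0<\sigma_{l,n}\le\dots\le\sigma_{l,1}$ be its eigenvalues, and set $\mathbf{P}^{(l)}=\mathbf{K}^{(l)}(\mathbf{K}^{(l)}+\lambda n\mathbf{I})^{-1}$ and $\varepsilon(l)=\sigma_{l,n}/(n\lambda+\sigma_{l,n})$. Let $\hat{\mathbf{f}}^{(0)}\in\mathbb{R}^n$ be the vector of values of the initial (level-$0$) estimator at $x_1,\dots,x_n$, and suppose the Laplacian-pyramid estimators satisfy, at the training points, $\hat{\mathbf{f}}^{(l+1)}=\hat{\mathbf{f}}^{(l)}+\mathbf{P}^{(l)}(\mathbf{f}-\hat{\mathbf{f}}^{(l)})$ for all $l\ge0$ (equivalently $\hat{\mathbf{f}}^{(l+1)}-\mathbf{f}=(\mathbf{I}-\mathbf{P}^{(l)})(\hat{\mathbf{f}}^{(l)}-\mathbf{f})$). Then for every integer $L>0$, $$\|\hat{\mathbf{f}}^{(L+1)}-\mathbf{f}\|\le\prod_{l=0}^{L}(1-\varepsilon(l))\,\|\hat{\mathbf{f}}^{(0)}-\mathbf{f}\|.$$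
   Context: $\|\cdot\|$ is the Euclidean norm on $\mathbb{R}^n$ (and the induced operator norm on matrices). The estimators are those of a Laplacian pyramid formulation of kernel ridge regression with noiseless labels $y_i=f(x_i)$: at each level, kernel ridge regression with kernel $\mathbf{K}^{(l)}$ and regularization $\lambda$ is fit to the current residual $\mathbf{f}-\hat{\mathbf{f}}^{(l)}$ and the fitted values $\mathbf{P}^{(l)}(\mathbf{f}-\hat{\mathbf{f}}^{(l)})$ are added to the estimator. *)

From HB Require Import structures.
From mathcomp Require Import all_boot all_order all_algebra.
From mathcomp Require Import all_classical all_reals all_analysis.
Set Implicit Arguments. Unset Strict Implicit. Unset Printing Implicit Defensive.
Import Order.TTheory GRing.Theory Num.Theory.
Local Open Scope ring_scope.

Definition vnorm (R : realType) (n : nat) (v : 'cV[R]_n) : R :=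
  Num.sqrt (\sum_(i < n) v i 0 ^+ 2).

Definition rnorm (R : realType) (D : nat) (v : 'rV[R]_D) : R :=
  Num.sqrt (\sum_(j < D) v 0 j ^+ 2).

Definition gauss_kernel (R : realType) (n D : nat) (x : 'I_n -> 'rV[R]_D) (r : R)
  : 'M[R]_n :=
  \matrix_(i, j) expR (- (rnorm (x i - x j) ^+ 2) / (2 * r ^+ 2)).

Definition smoother (R : realType) (n : nat) (K : 'M[R]_n) (lam : R) : 'M[R]_n :=
  K *m invmx (K + (lam * n%:R)%:M).

Definition smallest_eigenvalue (R : realType) (n : nat) (K : 'M[R]_n) (s : R) : Prop :=
  eigenvalue K s /\ (forall a, eigenvalue K a -> s <= a).

Definition eps_level (R : realType) (n : nat) (lam s : R) : R :=
  s / (n%:R * lam + s).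

From HB Require Import structures.
From mathcomp Require Import all_boot all_order all_algebra.
From mathcomp Require Import all_classical all_reals all_analysis.
From mathcomp Require Import complex.
Set Implicit Arguments. Unset Strict Implicit. Unset Printing Implicit Defensive.
Import Order.TTheory GRing.Theory Num.Theory.
Local Open Scope ring_scope.
Local Open Scope sesquilinear_scope.

(* Write e_l for fhat l - f and c for n lam.  The recursion reads
   e_(l+1) = (I - P_l) e_l, and I - P_l = c (K_l + c I)^-1.  As K_l is
   symmetric with spectrum bounded below by sigma_l, the spectral theorem
   gives (sigma_l + c) |u| <= |(K_l + c I) u|, hence
   |e_(l+1)| <= c / (sigma_l + c) |e_l| = (1 - eps(l)) |e_l|, and iterating
   gives the product.  The spectral theorem is only available over
   algebraically closed fields, so K_l is viewed as a complex Hermitian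
   matrix. *)

Local Notation "''[' u ]" := (dotmx u u) : ring_scope.

Section SpectralLowerBound.
Variable C : numClosedFieldType.

Lemma dotmx_mulmx_unitary m n (P : 'M[C]_(m, n)) (u : 'rV[C]_m) :
  P \is unitarymx -> '[u *m P] = '[u].
Proof.
move=> /unitarymxP PPt.
by rewrite !dotmxE trmx_mul map_mxM mulmxA -(mulmxA u) PPt mulmx1.
Qed.

Lemma spectral_diag_eigenvalue n (A : 'M[C]_n) i :
  A \is normalmx -> eigenvalue A (spectral_diag A 0 i).
Proof.
move=> /orthomx_spectralP A_eq; set P := spectralmx A in A_eq.
have P_unitary : P \is unitarymx := spectral_unitarymx A.
apply/eigenvalueP; exists (row i P).
  rewrite -row_mul {1}A_eq !mulmxA mulmxV ?unitarymx_unit // mul1mx mul_diag_mx.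
  by apply/rowP => j; rewrite !mxE.
apply/eqP => /(congr1 (mulmx^~ (P ^t*))); rewrite -row_mul (unitarymxP P_unitary).
by rewrite mul0mx => /rowP /(_ i); rewrite !mxE eqxx => /eqP; rewrite oner_eq0.
Qed.

Lemma dotmx_mul_diag_ge n (d y : 'rV[C]_n) (m : C) :
  0 <= m -> (forall i, m <= d 0 i) -> m ^+ 2 * '[y] <= '[y *m diag_mx d].
Proof.
move=> m_ge0 m_le_d; rewrite mul_mx_diag !dotmxE !mxE mulr_sumr.
apply: ler_sum => i _; rewrite !mxE -!normCK normrM exprMn mulrC.
apply: ler_wpM2l; first exact: exprn_ge0.
have d_ge0 : 0 <= d 0 i := le_trans m_ge0 (m_le_d i).
by rewrite ger0_norm // !expr2 ler_pM.
Qed.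

Lemma dotmx_mul_normal_ge n (A : 'M[C]_n) (m : C) (v : 'rV[C]_n) :
  A \is normalmx -> 0 <= m -> (forall i, m <= spectral_diag A 0 i) ->
  m ^+ 2 * '[v] <= '[v *m A].
Proof.
move=> /orthomx_spectralP A_eq m_ge0 m_le_d.
have P_unitary := spectral_unitarymx A.
rewrite A_eq invmx_unitary // !mulmxA dotmx_mulmx_unitary //.
rewrite -(@dotmx_mulmx_unitary _ _ (spectralmx A ^t*) v) ?trmxC_unitary //.
exact: dotmx_mul_diag_ge.
Qed.

End SpectralLowerBound.

Lemma eigenvalue_add_scalar (F : fieldType) n (K : 'M[F]_n) (c a : F) :
  eigenvalue (K + c%:M) a = eigenvalue K (a - c).
Proof. by rewrite /eigenvalue /eigenspace raddfB /= opprB addrA. Qed.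

Lemma eigenvalue0 (F : fieldType) n (A : 'M[F]_n) :
  eigenvalue A 0 = (A \notin unitmx).
Proof. by rewrite /eigenvalue /eigenspace raddf0 subr0 kermx_eq0 row_free_unit. Qed.

Lemma unitmx_eigenvalue_gt0 (F : numFieldType) n (A : 'M[F]_n) :
  (forall a, eigenvalue A a -> 0 < a) -> A \in unitmx.
Proof. by move=> A_gt0; apply: contraT; rewrite -eigenvalue0 => /A_gt0; rewrite ltxx. Qed.

Lemma contraction_prod_le (F : numDomainType) (a x : nat -> F) :
  (forall l, 0 <= a l) -> (forall l, x l.+1 <= a l * x l) ->
  forall L, x L <= (\prod_(0 <= l < L) a l) * x 0%N.
Proof.
move=> a_ge0 x_step; elim=> [|L IH]; first by rewrite big_geq // mul1r.
rewrite big_nat_recr //= mulrAC; apply: le_trans (x_step L) _.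
by rewrite mulrC; apply: ler_wpM2r.
Qed.

Section RealSymmetric.
Variable R : realType.
Local Notation toC := (real_complex R).

Lemma conj_real_complex (a : R) : Num.conj (toC a) = toC a.
Proof. by apply: conj_Creal; apply/complex_realP; exists a. Qed.

Lemma vnorm_ge0 n (v : 'cV[R]_n) : 0 <= vnorm v.
Proof. exact: sqrtr_ge0. Qed.

Lemma vnorm_sqr n (v : 'cV[R]_n) : vnorm v ^+ 2 = \sum_i v i 0 ^+ 2.
Proof. by rewrite sqr_sqrtr // sumr_ge0 // => i _; exact: sqr_ge0. Qed.

Lemma vnormZ n (a : R) (v : 'cV[R]_n) : vnorm (a *: v) = `|a| * vnorm v.
Proof.
rewrite /vnorm -sqrtr_sqr -sqrtrM ?sqr_ge0 // mulr_sumr.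
by congr Num.sqrt; apply: eq_bigr => i _; rewrite mxE exprMn.
Qed.

Lemma vnorm_sqr_dotmx n (v : 'cV[R]_n) :
  toC (vnorm v ^+ 2) = '[map_mx toC v^T].
Proof.
rewrite vnorm_sqr dotmxE mxE rmorph_sum; apply: eq_bigr => i _.
by rewrite !mxE conj_real_complex rmorphXn expr2.
Qed.

Lemma vnorm_mulmx_ge n (M : 'M[R]_n) (m : R) (w : 'cV[R]_n) :
  M^T = M -> 0 <= m -> (forall a, eigenvalue M a -> m <= a) ->
  m * vnorm w <= vnorm (M *m w).
Proof.
move=> M_sym m_ge0 M_ge; pose Mc := map_mx toC M.
have Mc_herm : Mc \is hermsymmx.
  apply/is_hermitianmxP; rewrite expr0 scale1r; apply/matrixP => i j.
  by rewrite !mxE conj_real_complex -{1}M_sym mxE.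
have Mc_ge : forall i, toC m <= spectral_diag Mc 0 i.
  move=> i; set d := spectral_diag Mc 0 i.
  have d_eq : toC (complex.Re d) = d.
    exact/RRe_real/(mxOverP (hermitian_spectral_diag_real Mc_herm)).
  rewrite -d_eq lecR; apply: M_ge; rewrite -(eigenvalue_map toC) /= d_eq.
  exact/spectral_diag_eigenvalue/hermitian_normalmx.
rewrite -(@ler_pXn2r _ 2) ?nnegrE ?mulr_ge0 ?vnorm_ge0 // exprMn -lecR.
rewrite rmorphM /= !vnorm_sqr_dotmx trmx_mul M_sym map_mxM rmorphXn.
apply: dotmx_mul_normal_ge => //; last by rewrite ler0c.
exact: hermitian_normalmx.
Qed.

End RealSymmetric.

Section LaplacianPyramid.
Variable R : realType.

Lemma rnormN D (v : 'rV[R]_D) : rnorm (- v) = rnorm v.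
Proof. by rewrite /rnorm; congr Num.sqrt; apply: eq_bigr => j _; rewrite mxE sqrrN. Qed.

Lemma gauss_kernel_sym n D (x : 'I_n -> 'rV[R]_D) (r : R) :
  (gauss_kernel x r)^T = gauss_kernel x r.
Proof. by apply/matrixP => i j; rewrite !mxE -opprB rnormN. Qed.

Lemma sub1_smoother n (K : 'M[R]_n) (lam : R) :
  K + (lam * n%:R)%:M \in unitmx ->
  1%:M - smoother K lam = (lam * n%:R) *: invmx (K + (lam * n%:R)%:M).
Proof.
move=> M_unit; rewrite /smoother -[1%:M](mulmxV M_unit) -mulmxBl.
by rewrite addrC addKr mul_scalar_mx.
Qed.

Lemma one_sub_eps_level n (lam s : R) : 0 < s -> 0 <= lam ->
  1 - eps_level n lam s = (lam * n%:R) / (s + lam * n%:R).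
Proof.
move=> s_gt0 lam_ge0.
have sc_neq0 : s + lam * n%:R != 0 by rewrite lt0r_neq0 // ltr_wpDr // mulr_ge0.
rewrite /eps_level (mulrC n%:R) (addrC _ s) -{1}(divff sc_neq0) -mulrBl.
by rewrite addrC addKr.
Qed.

Lemma vnorm_sub1_smoother_le n (K : 'M[R]_n) (lam s : R) (e : 'cV[R]_n) :
  K^T = K -> (forall a, eigenvalue K a -> s <= a) -> 0 < s -> 0 < lam ->
  vnorm ((1%:M - smoother K lam) *m e) <= (1 - eps_level n lam s) * vnorm e.
Proof.
move=> K_sym K_ge s_gt0 lam_gt0.
set c := lam * n%:R; have c_ge0 : 0 <= c by rewrite mulr_ge0 // ltW.
have sc_gt0 : 0 < s + c by rewrite ltr_wpDr.
set M := K + c%:M.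
have M_ge a : eigenvalue M a -> s + c <= a.
  by rewrite eigenvalue_add_scalar => /K_ge; rewrite lerBrDr.
have M_unit : M \in unitmx.
  by apply: unitmx_eigenvalue_gt0 => a /M_ge; apply: lt_le_trans.
have M_sym : M^T = M by rewrite raddfD /= tr_scalar_mx K_sym.
have := vnorm_mulmx_ge (invmx M *m e) M_sym (ltW sc_gt0) M_ge.
rewrite mulmxA mulmxV // mul1mx => inv_bound.
rewrite sub1_smoother // -scalemxAl vnormZ ger0_norm //.
rewrite (one_sub_eps_level _ s_gt0 (ltW lam_gt0)) -/c.
have coef_ge0 : 0 <= c / (s + c) by rewrite divr_ge0 // ltW.
apply: le_trans (ler_wpM2l coef_ge0 inv_bound).
by rewrite mulrA divfK // lt0r_neq0.
Qed.

End LaplacianPyramid.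

Theorem theorem1 (R : realType) (n D : nat) (x : 'I_n -> 'rV[R]_D)
  (f : 'rV[R]_D -> R) (lam : R) (r : nat -> R) (sigma : nat -> R)
  (fhat : nat -> 'cV[R]_n) :
  injective x ->
  0 < lam ->
  (forall l, 0 < r l) ->
  (forall l, smallest_eigenvalue (gauss_kernel x (r l)) (sigma l)) ->
  (forall l, 0 < sigma l) ->
  (forall l, fhat l.+1 = fhat l +
      smoother (gauss_kernel x (r l)) lam *m ((\col_i f (x i)) - fhat l)) ->
  forall L : nat, (0 < L)%N ->
    vnorm (fhat L.+1 - \col_i f (x i)) <=
      (\prod_(0 <= l < L.+1) (1 - eps_level n lam (sigma l)))
        * vnorm (fhat 0%N - \col_i f (x i)).
Proof.
move=> _ lam_gt0 _ sigma_min sigma_gt0 fhat_rec L _.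
set F := \col_i f (x i).
apply: (contraction_prod_le (x := fun l => vnorm (fhat l - F))) => l.
  have [lam_ge0 sigma_ge0] := (ltW lam_gt0, ltW (sigma_gt0 l)).
  by rewrite one_sub_eps_level // divr_ge0 ?addr_ge0 ?mulr_ge0.
have residual_rec : fhat l.+1 - F =
    (1%:M - smoother (gauss_kernel x (r l)) lam) *m (fhat l - F).
  by rewrite fhat_rec mulmxBl mul1mx -[F - _]opprB mulmxN addrAC.
have [_ sigma_le] := sigma_min l.
rewrite residual_rec.
exact: vnorm_sub1_smoother_le (gauss_kernel_sym x (r l)) sigma_le (sigma_gt0 l) lam_gt0.
Qed.
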